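(* Let $T$ be a tree and $x,y$ distinct leaves of $T$. Let $P$ be the $xy$-path in $T$, and let $x',y'$ be the vertices of $T$ adjacent to $x$ and $y$, respectively. Write $V(P)=\{0,1,\ldots,r\}$ along the path with $x=0$ and $y=r$. For $i\in\{1,\ldots,r-1\}$ let $T_i$ be the union of the components of $T-V(P)$ that are adjacent to vertex $i$ in $T$ (the empty graph if there are none). If $T'$ is the tree obtained from $T$ by deleting $x$ and adding a new leaf adjacent to $y'$, then $$W(T')-W(T)=\sum_{i=1}^{r-1}(r-2i)|V(T_i)|-(r-2).$$
   Context: All graphs are finite and simple; $d(u,v)$ denotes distance and $W(G)=\sum_{\{u,v\}\subseteq V(G)} d(u,v)$ is the Wiener index (sum over unordered pairs of vertices). A leaf is a vertex of degree $1$. *)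

From mathcomp Require Import all_boot all_order all_algebra.
Set Implicit Arguments. Unset Strict Implicit. Unset Printing Implicit Defensive.
Import GRing.Theory Num.Theory.

Definition simple_graph (T : finType) (e : rel T) : Prop :=
  symmetric e /\ irreflexive e.

Definition connected_graph (T : finType) (e : rel T) : Prop :=
  forall u v : T, connect e u v.

Definition acyclic (T : finType) (e : rel T) : Prop :=
  forall c : seq T, 3 <= size c -> uniq c -> ~~ cycle e c.

Definition is_tree (T : finType) (e : rel T) : Prop :=
  [/\ simple_graph e, connected_graph e & acyclic e].

Definition deg (T : finType) (e : rel T) (v : T) : nat := #|[set w | e v w]|.

Definition is_leaf (T : finType) (e : rel T) (v : T) : Prop := deg e v = 1%N.

Definition walk_len (T : finType) (e : rel T) (u v : T) (n : nat) : bool :=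
  [exists p : n.-tuple T, path e u p && (last u p == v)].

(* distance: least n with a walk of length n (for connected graphs the
   least such n is < #|T|, so searching iota 0 #|T| is exhaustive) *)
Definition dist (T : finType) (e : rel T) (u v : T) : nat :=
  find (walk_len e u v) (iota 0 #|T|).

Definition wiener (T : finType) (e : rel T) : nat :=
  \sum_(u : T) \sum_(v : T | enum_rank u < enum_rank v) dist e u v.

(* the tree obtained by deleting leaf x and adding a new leaf adjacent to y';
   realised on the same vertex set, with the new leaf playing the role of x *)
Definition move_leaf (T : finType) (e : rel T) (x y' : T) : rel T :=
  fun u v => if u == x then v == y' else if v == x then u == y' else e u v.

(* vertex set of T_i: vertices off the path P (given by its vertex list Pv)
   lying in a component of T - V(P) that has a vertex adjacent to pi *)
Definition hanging (T : finType) (e : rel T) (Pv : seq T) (pi : T) : {set T} :=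
  [set v | (v \notin Pv) &&
     [exists w, [&& w \notin Pv, e pi w &
        connect (fun a b => [&& e a b, a \notin Pv & b \notin Pv]) w v]]].

(* Moving the leaf x next to y' keeps every distance between vertices other
   than x, while d(x, v) = d(x', v) + 1 before and d(y', v) + 1 after; hence
   W(T') - W(T) = sum_{v <> x} (d(y', v) - d(x', v)).  On the xy-path
   P_0 ... P_r we have x' = P_1 and y' = P_(r-1), and for v equal to or hanging
   at P_i the tree gives d(P_j, v) = |i - j| + d(P_i, v).  So a vertex hanging
   at P_i contributes (r - 1 - i) - (i - 1) = r - 2i, the path vertices
   contribute 0 altogether by the symmetry i <-> r - i, and leaving out v = x
   removes (r - 1) - 1 = r - 2. *)

From mathcomp Require Import all_boot all_order all_algebra zify.
Import GRing.Theory Num.Theory.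
Set Implicit Arguments. Unset Strict Implicit. Unset Printing Implicit Defensive.

Lemma rev_path_sym (T : eqType) (e : rel T) u s : symmetric e ->
  path e u s -> path e (last u s) (rev (belast u s)).
Proof. by move=> sym_e; rewrite rev_path (@eq_path _ _ e) // => a b; rewrite sym_e. Qed.

Lemma rev_belast_cons (T : eqType) (u : T) s :
  last u s :: rev (belast u s) = rev (u :: s).
Proof. by rewrite [u :: s]lastI rev_rcons. Qed.

Lemma last_rev_belast (T : eqType) (u : T) s : last (last u s) (rev (belast u s)) = u.
Proof. by case: s => //= a s; rewrite rev_cons last_rcons. Qed.

Lemma leaf_nbr (T : finType) (e : rel T) v a b : is_leaf e v -> e v a -> e v b -> a = b.
Proof.
move=> /eqP/cards1P[c nbrs] va vb.
have : a \in [set w | e v w] by rewrite inE.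
have : b \in [set w | e v w] by rewrite inE.
by rewrite nbrs !inE => /eqP -> /eqP ->.
Qed.

Section Distance.
Variables (T : finType) (e : rel T).
Implicit Types (u v : T) (s : seq T).

Lemma walk_lenP u v n :
  reflect (exists s, [/\ path e u s, last u s = v & size s = n]) (walk_len e u v n).
Proof.
apply: (iffP existsP) => [[t /andP[pt /eqP <-]] | [s [ps <- <-]]].
  by exists (val t); rewrite size_tuple.
by exists (in_tuple s); rewrite /= ps eqxx.
Qed.

Lemma dist_le u s : path e u s -> dist e u (last u s) <= size s.
Proof.
move=> es; rewrite /dist; have [lt_sT | ] := ltnP (size s) #|T|; last first.
  (* [find] never exceeds the length [#|T|] of the searched range. *)
  by apply: leq_trans; rewrite -[X in _ <= X](size_iota 0) find_size.
have walk_s : walk_len e u (last u s) (size s) by apply/walk_lenP; exists s.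
by rewrite leqNgt; apply/negP => /(before_find 0); rewrite nth_iota // add0n walk_s.
Qed.

Lemma dist0 u : dist e u u = 0.
Proof. by apply/eqP; rewrite -leqn0 (dist_le (s := [::])). Qed.

Lemma shortest_path u v : connect e u v ->
  exists s, [/\ path e u s, last u s = v, uniq (u :: s) & size s = dist e u v].
Proof.
case/connectP => s0 /shortenP[s es us _] ->.
have walk_s : has (walk_len e u (last u s)) (iota 0 #|T|).
  apply/hasP; exists (size s); last by apply/walk_lenP; exists s.
  by rewrite mem_iota add0n -[(size s).+1]/(size (u :: s)) -(card_uniqP us) max_card.
have := nth_find 0 walk_s; rewrite has_find size_iota in walk_s.
rewrite nth_iota // add0n.
case/walk_lenP => t [/shortenP[t' et' ut' sub_t'] <- size_t].
exists t'; split => //; apply/eqP; rewrite eqn_leq dist_le // andbT.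
by rewrite /dist -size_t; apply: uniq_leq_size => //; case/andP: ut'.
Qed.

Lemma dist_sym u v : symmetric e -> dist e u v = dist e v u.
Proof.
move=> sym_e; rewrite /dist; apply: eq_find => n.
suff walk_sym a b : walk_len e a b n -> walk_len e b a n by apply/idP/idP; apply: walk_sym.
case/walk_lenP => s [es <- <-]; apply/walk_lenP; exists (rev (belast a s)).
by rewrite rev_path_sym // last_rev_belast size_rev size_belast.
Qed.

End Distance.

Section LeafDistances.
Variables (T : finType) (e : rel T) (x x0 : T).
Hypotheses (sym_e : symmetric e) (x_nbr : forall w, e x w -> w = x0).

Lemma leaf_notin_path u s : path e u s -> uniq (u :: s) ->
  u != x -> last u s != x -> x \notin s.
Proof.
move=> es us ux sx; apply/negP => /splitPr es_split; move: es_split es us sx.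
case=> s1 s2; rewrite last_cat; case: s2 => [|b s2]; first by rewrite /= eqxx.
rewrite -cat_cons cat_path cat_uniq => /andP[_ /and3P[ax xb _]].
move=> /and3P[_ /negP no_common _] _; apply: no_common; apply/hasP; exists b.
  by rewrite !inE eqxx orbT.
by rewrite sym_e in ax; rewrite (x_nbr xb) -(x_nbr ax) mem_last.
Qed.

Lemma dist_le_agree_off_leaf (e' : rel T) u v : {in predC1 x &, e =2 e'} ->
  u != x -> v != x -> connect e u v -> connect e' u v /\ dist e' u v <= dist e u v.
Proof.
move=> agree ux vx /shortest_path[s [es sv us <-]]; rewrite -sv in vx *.
have xs : x \notin s := leaf_notin_path es us ux vx.
have e's : path e' u s.
  rewrite -(eq_in_path agree) //= ux; apply/allP => a as_.
  by apply: contraNneq xs => <-.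
by split; [apply/connectP; exists s | apply: dist_le].
Qed.

Lemma dist_leaf v : e x x0 -> x0 != x -> v != x -> connect e x0 v ->
  dist e x v = (dist e x0 v).+1.
Proof.
move=> xx0 x0x vx x0v; apply/eqP; rewrite eqn_leq; apply/andP; split.
  have [s [es <- _ <-]] := shortest_path x0v.
  by rewrite -(last_cons x) (dist_le (s := x0 :: s)) //= xx0.
have /shortest_path[[|a s] [/= + + _ <-]] := connect_trans (connect1 xx0) x0v.
  by move=> _ vE; rewrite vE eqxx in vx.
by case/andP => /x_nbr -> es <-; apply: dist_le.
Qed.

End LeafDistances.

Section Wiener.
Variable T : finType.
Implicit Types (e : rel T) (x : T).

Lemma wiener_double e : symmetric e -> (wiener e).*2 = \sum_u \sum_v dist e u v.
Proof.
move=> sym_e; rewrite /wiener -addnn.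
have split_uv u v : dist e u v =
    (if enum_rank u < enum_rank v then dist e u v else 0)
  + (if enum_rank v < enum_rank u then dist e v u else 0).
  case: ltngtP => [||/ord_inj/enum_rank_inj ->]; rewrite ?addn0 ?add0n ?dist0 //.
  by move=> _; apply: dist_sym.
under [RHS]eq_bigr do under eq_bigr do rewrite split_uv.
under [RHS]eq_bigr do rewrite big_split /=.
rewrite big_split /=; congr (_ + _).
  by apply: eq_bigr => u _; rewrite big_mkcond.
by rewrite exchange_big; apply: eq_bigr => u _; rewrite big_mkcond.
Qed.

Local Open Scope ring_scope.

Lemma wiener_diff_one_vertex e e' x : symmetric e -> symmetric e' ->
  {in predC1 x &, forall u v, dist e' u v = dist e u v} ->
  (wiener e' : int) - (wiener e : int)
    = \sum_(v | v != x) ((dist e' x v : int) - (dist e x v : int)).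
Proof.
move=> sym_e sym_e' same_off.
pose g u v := (dist e' u v : int) - (dist e u v : int).
have g_sym u v : g u v = g v u by rewrite /g dist_sym // [dist e _ _]dist_sym.
have row_x : \sum_v g x v = \sum_(v | v != x) g x v.
  by rewrite (bigD1 x) //= /g !dist0 subrr add0r.
have row_off u : u != x -> \sum_v g u v = g x u.
  move=> ux; rewrite (bigD1 x) //= big1 ?addr0 1?g_sym // => v vx.
  by rewrite /g same_off ?subrr.
set S := \sum_(v | v != x) g x v.
have double_diff : (wiener e').*2%:Z - (wiener e).*2%:Z = S + S.
  transitivity (\sum_u \sum_v g u v).
    rewrite !wiener_double // -!natz !natr_sum -sumrB; apply: eq_bigr => u _.
    by rewrite !natr_sum -sumrB; apply: eq_bigr => v _; rewrite !natz.
  rewrite (bigD1 x) //= row_x; congr (_ + _).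
  by apply: eq_bigr => u ux; rewrite row_off.
change ((wiener e' : int) - (wiener e : int) = S); lia.
Qed.

End Wiener.

Section MoveLeaf.
Variables (T : finType) (e : rel T) (x x' y' : T).
Hypotheses (sym_e : symmetric e) (conn_e : connected_graph e).
Hypotheses (x_nbr : forall w, e x w -> w = x') (xx' : e x x') (x'x : x' != x) (y'x : y' != x).

Let e' := move_leaf e x y'.

Lemma move_leaf_sym : symmetric e'.
Proof.
move=> a b; rewrite /e' /move_leaf.
by case: (a =P x) => [->|_]; case: (b =P x) => [bx|_]; [subst b | | | rewrite sym_e].
Qed.

Lemma move_leaf_agree : {in predC1 x &, e =2 e'}.
Proof. by move=> a b /negbTE ax /negbTE bx; rewrite /e' /move_leaf ax bx. Qed.

Lemma move_leaf_nbr w : e' x w -> w = y'.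
Proof. by rewrite /e' /move_leaf eqxx => /eqP. Qed.

Lemma connect_move_leaf u v : u != x -> v != x -> connect e' u v.
Proof.
move=> ux vx.
by case: (dist_le_agree_off_leaf sym_e x_nbr move_leaf_agree ux vx (conn_e u v)).
Qed.

Lemma dist_move_leaf_off u v : u != x -> v != x -> dist e' u v = dist e u v.
Proof.
move=> ux vx; have agree' : {in predC1 x &, e' =2 e}.
  by move=> a b ax bx; rewrite move_leaf_agree.
have [_ le_e'e] := dist_le_agree_off_leaf sym_e x_nbr move_leaf_agree ux vx (conn_e u v).
have [_ le_ee'] :=
  dist_le_agree_off_leaf move_leaf_sym move_leaf_nbr agree' ux vx (connect_move_leaf ux vx).
by apply/eqP; rewrite eqn_leq le_e'e le_ee'.
Qed.

Local Open Scope ring_scope.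

Lemma wiener_move_leaf : (wiener e' : int) - (wiener e : int)
  = \sum_(v | v != x) ((dist e y' v : int) - (dist e x' v : int)).
Proof.
rewrite (wiener_diff_one_vertex (x := x) sym_e move_leaf_sym); last first.
  by move=> u v ux vx; apply: dist_move_leaf_off.
apply: eq_bigr => v vx.
have e'xy' : e' x y' by rewrite /e' /move_leaf eqxx.
rewrite (dist_leaf move_leaf_nbr e'xy' y'x vx (connect_move_leaf y'x vx)).
by rewrite (dist_leaf x_nbr xx' x'x vx (conn_e x' v)) dist_move_leaf_off //; lia.
Qed.

End MoveLeaf.

Section Tree.
Variables (T : finType) (e : rel T).
Hypotheses (sym_e : symmetric e) (acyc_e : acyclic e).

Lemma tree_no_bypass u a b s : e u a -> e u b -> a != b ->
  path e a s -> last a s = b -> u \notin a :: s -> False.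
Proof.
move=> ua ub ab es; case: (shortenP es) => t et ut sub_t tb u_s.
have u_t : u \notin a :: t.
  by apply: contra u_s; rewrite !inE => /orP[-> | /sub_t ->]; rewrite ?orbT.
case: t et ut tb u_t {sub_t} => [_ _ /= ba|c t et ut tb u_t]; first by rewrite ba eqxx in ab.
have uniq_c : uniq [:: u, a, c & t] by rewrite cons_uniq u_t ut.
have := @acyc_e [:: u, a, c & t] isT uniq_c; move: et tb.
by rewrite /= rcons_path ua => /andP[-> ->] ->; rewrite sym_e ub.
Qed.

Lemma tree_path_unique u s t : path e u s -> path e u t ->
  uniq (u :: s) -> uniq (u :: t) -> last u s = last u t -> s = t.
Proof.
elim: s u t => [|a s IH] u [|b t] //=.
- by move=> _ _ _ /andP[ut _] tu; rewrite tu mem_last in ut.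
- by move=> _ _ /andP[us _] _ su; rewrite -su mem_last in us.
move=> /andP[ua es] /andP[ub et] /andP[u_as us] /andP[u_bt ut] st.
have [ab|ab] := eqVneq a b; first by subst b; rewrite (IH a t).
exfalso; apply: (tree_no_bypass ua ub ab (s := s ++ rev (belast b t))).
- by rewrite cat_path es st rev_path_sym.
- by rewrite last_cat st last_rev_belast.
rewrite -cat_cons mem_cat negb_or u_as mem_rev.
by apply: contra u_bt => /mem_belast.
Qed.

Lemma tree_dist u s : path e u s -> uniq (u :: s) -> dist e u (last u s) = size s.
Proof.
move=> es us; have /shortest_path[t [et ts ut <-]] : connect e u (last u s).
  by apply/connectP; exists s.
by rewrite (tree_path_unique et es).
Qed.

Section PathInTree.
Variables (x0 : T) (P : seq T).
Hypotheses (sorted_P : sorted e P) (uniq_P : uniq P).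

Lemma path_segment i j : i < size P -> j < size P ->
  exists s, [/\ path e (nth x0 P j) s, last (nth x0 P j) s = nth x0 P i,
    uniq (nth x0 P j :: s), {subset s <= P} & size s = `|i - j|].
Proof.
wlog le_ji : i j / j <= i => [segment ip jp | ip jp].
  have [le_ji|lt_ij] := leqP j i; first exact: segment.
  have [s [es si us sP size_s]] := segment j i (ltnW lt_ij) jp ip.
  exists (rev (belast (nth x0 P i) s)); rewrite -si last_rev_belast rev_path_sym //.
  rewrite size_rev size_belast distnC rev_belast_cons rev_uniq; split => // a.
  by rewrite mem_rev => /mem_belast; rewrite inE => /predU1P[->|/sP //]; apply: mem_nth.
have drop_j : drop j P = nth x0 P j :: drop j.+1 P := drop_nth x0 jp.
have segE : nth x0 P j :: take (i - j) (drop j.+1 P) = take (i - j).+1 (drop j P).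
  by rewrite drop_j.
have size_seg : size (take (i - j) (drop j.+1 P)) = i - j.
  by rewrite size_takel // size_drop; lia.
exists (take (i - j) (drop j.+1 P)); split.
- by apply: take_path; have := drop_sorted j sorted_P; rewrite drop_j.
- by rewrite (last_nth x0) segE size_seg nth_take // nth_drop subnKC.
- by rewrite segE take_uniq // drop_uniq.
- by move=> a /mem_take /mem_drop.
- by rewrite size_seg distnEl.
Qed.

Lemma hanging_path z v : v \in hanging e P z ->
  exists s, [/\ path e z s, last z s = v, uniq (z :: s) & {subset s <= [predC P]}].
Proof.
rewrite inE => /andP[_ /existsP[w /and3P[wP zw /connectP[s ws ->]]]].
have off_s : all [predC P] s.
  elim: s w ws {wP zw} => [|b s IH] w //= /andP[/and3P[_ _ bP] /IH ->].
  by rewrite andbT.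
have zws : path e z (w :: s) by rewrite /= zw; apply: sub_path ws => a b /andP[].
rewrite -[last w s]/(last z (w :: s)).
case: (shortenP zws) => t zt ut sub_t; exists t; split => // a /sub_t.
by rewrite inE => /predU1P[->|/(allP off_s)].
Qed.

Lemma dist_nth_cat i j Q : i < size P -> j < size P ->
  path e (nth x0 P i) Q -> uniq (nth x0 P i :: Q) -> {subset Q <= [predC P]} ->
  dist e (nth x0 P j) (last (nth x0 P i) Q) = `|i - j| + size Q.
Proof.
move=> ip jp iQ uQ Q_off; have [s [js si us sP <-]] := path_segment ip jp.
rewrite -size_cat -si -last_cat tree_dist ?cat_path ?js ?si //.
have uniq_Q : uniq Q by case/andP: uQ.
rewrite -cat_cons cat_uniq us uniq_Q andbT.
apply/hasPn => a /Q_off; rewrite inE; apply: contra; rewrite inE.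
by case/predU1P => [->|/sP //]; apply: mem_nth.
Qed.

Lemma dist_nth i j : i < size P -> j < size P ->
  dist e (nth x0 P j) (nth x0 P i) = `|i - j|.
Proof. by move=> ip jp; rewrite -[nth x0 P i]/(last _ [::]) dist_nth_cat ?addn0. Qed.

Lemma dist_hanging i j v : i < size P -> j < size P ->
  v \in hanging e P (nth x0 P i) ->
  dist e (nth x0 P j) v = `|i - j| + dist e (nth x0 P i) v.
Proof.
move=> ip jp /hanging_path[Q [iQ <- uQ Q_off]].
by rewrite tree_dist // dist_nth_cat.
Qed.

Lemma hanging_disjoint i j v : i < size P -> j < size P ->
  v \in hanging e P (nth x0 P i) -> v \in hanging e P (nth x0 P j) -> i = j.
Proof.
move=> ip jp vi vj; have := dist_hanging ip jp vi.
rewrite (dist_hanging jp ip vj) distnC; lia.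
Qed.

Lemma hanging_cover a v : a \in P -> connect e v a -> v \notin P ->
  exists2 z, z \in P & v \in hanging e P z.
Proof.
move=> aP /connectP[s + aE]; rewrite {a}aE in aP.
elim: s v aP => [|b s IH] v /=; first by move=> ->.
move=> sP /andP[vb bs] vP; have [bP|bP] := boolP (b \in P).
  by exists b => //; rewrite inE vP; apply/existsP; exists v; rewrite vP sym_e vb connect0.
have [z zP /[!inE] /andP[_ /existsP[w /and3P[wP zw wb]]]] := IH b sP bs bP.
exists z => //; rewrite inE vP; apply/existsP; exists w; rewrite wP zw.
by apply: connect_trans wb (connect1 _); rewrite /= sym_e vb bP vP.
Qed.

Lemma hanging_end z : {subset e z <= P} -> hanging e P z = set0.
Proof.
move=> z_nbr; apply/setP => v; rewrite inE in_set0.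
by apply/negP => /andP[_ /existsP[w /and3P[/negP wP /z_nbr]]].
Qed.

End PathInTree.
End Tree.

Local Open Scope ring_scope.

Lemma sum_disjoint_cover (T : finType) (I : eqType) (R : nmodType) (A : pred T)
    (s : seq I) (H : I -> {set T}) (c : I -> R) (f : T -> R) :
  uniq s ->
  (forall v, A v -> exists2 i, i \in s & v \in H i) ->
  (forall i j v, i \in s -> j \in s -> v \in H i -> v \in H j -> i = j) ->
  (forall i v, i \in s -> v \in H i -> A v /\ f v = c i) ->
  \sum_(v | A v) f v = \sum_(i <- s) c i *+ #|H i|.
Proof.
move=> uniq_s cover disjoint value.
transitivity (\sum_(v | A v) \sum_(i <- s) (if v \in H i then c i else 0)).
  apply: eq_bigr => v /cover[i si vi]; rewrite (bigD1_seq i) //= vi big1_seq ?addr0.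
    by case: (value i v si vi).
  move=> j /andP[ji sj]; case: ifP => // vj.
  by rewrite (disjoint j i v sj si vj vi) eqxx in ji.
rewrite exchange_big !big_seq; apply: eq_bigr => i si /=.
rewrite -big_mkcondr -sumr_const; apply: eq_bigl => v /=.
by apply/andP/idP => [[] //|vi]; split=> //; case: (value i v si vi).
Qed.

Section PathSums.
Variables (T : finType) (e : rel T) (x0 : T) (P : seq T) (r : nat).
Hypotheses (sym_e : symmetric e) (acyc_e : acyclic e) (conn_e : connected_graph e).
Hypotheses (sorted_P : sorted e P) (uniq_P : uniq P) (size_P : size P = r.+1) (r_gt0 : (0 < r)%N).

(* The summand at P_k is |k - (r - 1)| - |k - 1|, odd under k <-> r - k. *)
Lemma sum_dist_diff_on_path :
  \sum_(v <- P) ((dist e (nth x0 P r.-1) v : int) - (dist e (nth x0 P 1) v : int)) = 0.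
Proof.
rewrite (big_nth x0) size_P sumrB; apply/eqP; rewrite subr_eq0; apply/eqP.
rewrite [LHS]big_nat_rev; apply: eq_big_nat => k /andP[_ kr] /=.
rewrite !dist_nth ?size_P //; lia.
Qed.

Lemma sum_dist_diff_off_path :
  {subset e (nth x0 P 0) <= P} -> {subset e (nth x0 P r) <= P} ->
  \sum_(v | v \notin P) ((dist e (nth x0 P r.-1) v : int) - (dist e (nth x0 P 1) v : int))
  = \sum_(1 <= i < r) (r%:Z - (2 * i)%:Z) * (#|hanging e P (nth x0 P i)| : int).
Proof.
move=> end0 endr; have ltP i : (i < size P)%N = (i <= r)%N by rewrite size_P.
rewrite (sum_disjoint_cover (s := index_iota 1 r) (H := fun i => hanging e P (nth x0 P i))
  (c := fun i : nat => r%:Z - (2 * i)%:Z)).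
- by apply: eq_bigr => i _; rewrite pmulrn mulrzz.
- exact: iota_uniq.
- move=> v vP; have P0 : nth x0 P 0 \in P by rewrite mem_nth ?size_P.
  have [z zP vz] := hanging_cover sym_e P0 (conn_e v _) vP.
  have not_end k : hanging e P (nth x0 P k) = set0 -> index z P != k.
    by move=> Hk; apply: contraTneq vz => zk; rewrite -(nth_index x0 zP) zk Hk in_set0.
  have := index_mem z P; rewrite zP size_P ltnS => z_le_r.
  exists (index z P); last by rewrite nth_index.
  by rewrite mem_index_iota lt0n ltn_neqAle z_le_r andbT !not_end ?hanging_end.
- move=> i j v; rewrite !mem_index_iota => /andP[_ ir] /andP[_ jr].
  by apply: (hanging_disjoint sym_e acyc_e sorted_P uniq_P); rewrite ltP ltnW.
- move=> i v; rewrite mem_index_iota => /andP[i_ge1 ir] vi; split.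
    by move: vi; rewrite inE => /andP[].
  have iP : (i < size P)%N by rewrite ltP ltnW.
  have dist_vi j : (j <= r)%N -> dist e (nth x0 P j) v = (`|i - j| + dist e (nth x0 P i) v)%N.
    by move=> jr; apply: (dist_hanging sym_e acyc_e sorted_P uniq_P) => //; rewrite ltP.
  rewrite (dist_vi r.-1) ?leq_pred // (dist_vi 1) // distnEr ?distnEl //; first lia.
  by rewrite -ltnS prednK.
Qed.

Lemma sum_dist_diff_but_first :
  {subset e (nth x0 P 0) <= P} -> {subset e (nth x0 P r) <= P} ->
  \sum_(v | v != nth x0 P 0) ((dist e (nth x0 P r.-1) v : int) - (dist e (nth x0 P 1) v : int))
  = \sum_(1 <= i < r) (r%:Z - (2 * i)%:Z) * (#|hanging e P (nth x0 P i)| : int) - (r%:Z - 2).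
Proof.
move=> end0 endr.
have sum_but a (F : T -> int) : \sum_(v | v != a) F v = \sum_v F v - F a.
  by rewrite [in RHS](bigD1 a) //= addrC addrK.
have dist_to_first j : (j <= r)%N -> dist e (nth x0 P j) (nth x0 P 0) = j.
  by move=> jr; rewrite dist_nth ?size_P // dist0n.
rewrite sum_but (bigID (fun v => v \in P)) /= -big_uniq //.
rewrite sum_dist_diff_on_path add0r sum_dist_diff_off_path //.
by rewrite !dist_to_first ?leq_pred //; congr (_ - _); lia.
Qed.

End PathSums.


Unset Implicit Arguments.

Theorem mainTheorem10 (T : finType) (e : rel T) (x y x' y' : T) (p : seq T) :
  is_tree e ->
  x != y -> is_leaf e x -> is_leaf e y ->
  e x x' -> e y y' ->
  ~~ e x y ->
  (* P = x :: p is the xy-path, vertex i of P is nth x (x :: p) i, r = size p *)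
  path e x p -> last x p = y -> uniq (x :: p) ->
  let r := size p in
  let Pv := x :: p in
  (wiener (move_leaf e x y') : int) - (wiener e : int) =
    \sum_(1 <= i < r) ((r%:Z - (2 * i)%:Z) * (#|hanging e Pv (nth x Pv i)| : int))
    - (r%:Z - 2).
Proof.
move=> [[sym_e irr_e] conn_e acyc_e] xy leaf_x leaf_y xx' yy' nxy xp p_y uniq_P r P.
have r_ge2 : (1 < r)%N.
  rewrite /r; case: p xp p_y {uniq_P r P} => [_ /= yx|a [|b p]] //.
    by rewrite yx eqxx in xy.
  by move=> /= /andP[xa _] ay; rewrite -ay xa in nxy.
have y_last : nth x P r = y by rewrite -p_y (last_nth x).
have sorted_P : sorted e P := xp.
have /(pathP x) edge_P := xp.
have x_nbr w : e x w -> w = nth x P 1.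
  by move=> xw; apply: (leaf_nbr leaf_x xw (edge_P 0 _)); rewrite ltnW.
have y_nbr w : e y w -> w = nth x P r.-1.
  move=> yw; apply: (leaf_nbr leaf_y yw); rewrite -y_last sym_e.
  have -> : nth x P r = nth x P r.-1.+1 by rewrite prednK // ltnW.
  by apply: edge_P; rewrite ltn_predL ltnW.
have x'x : x' != x by apply: contraTneq xx' => ->; rewrite irr_e.
have y'x : y' != x by apply: contraNneq nxy => y'x; rewrite sym_e -y'x.
rewrite (wiener_move_leaf sym_e conn_e (fun w xw => leaf_nbr leaf_x xw xx') xx' x'x y'x).
rewrite (x_nbr _ xx') (y_nbr _ yy').
rewrite (sum_dist_diff_but_first sym_e acyc_e conn_e sorted_P uniq_P) //.
- exact: ltnW.
- by move=> w /x_nbr ->; rewrite mem_nth // ltnS ltnW.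
- by rewrite y_last => w /y_nbr ->; rewrite mem_nth // ltnS leq_pred.
Qed.
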